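(* Let $C$ be a field of characteristic zero, let $P(x,y)\in C[x,y]$ be a polynomial with $\deg_yP=d$, and let $R(x)=\operatorname{Res}_y(P,P_y)$. Assume that $\alpha\in\bar C$ is a root of $R(x)$ of multiplicity $k$. Then the squarefree part \[ S(y)=P(\alpha,y)\big/\gcd\bigl(P(\alpha,y),P_y(\alpha,y)\bigr) \] of $P(\alpha,y)$ has degree at least $d-k$.
   Context: $P_y$ is the partial derivative of $P$ with respect to $y$, and $\operatorname{Res}_y$ is the resultant with respect to $y$ (determinant of the Sylvester matrix). *)

From HB Require Import structures.
From mathcomp Require Import all_boot all_order all_algebra.
Set Implicit Arguments. Unset Strict Implicit. Unset Printing Implicit Defensive.
Import GRing.Theory.
Local Open Scope ring_scope.

(* A bivariate polynomial P(x,y) is represented as P : {poly {poly C}}: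
   the outer variable is y, the coefficients are polynomials in x.
   [evalx iota a P] is P(a, y) in L[y], where iota : C -> L is the
   embedding of C into the (algebraically closed) field L. *)
Definition evalx (C L : fieldType) (iota : {rmorphism C -> L}) (a : L)
    (P : {poly {poly C}}) : {poly L} :=
  map_poly (fun q : {poly C} => (map_poly iota q).[a]) P.

(* At x = alpha the Sylvester matrix of P and P_y has as rows the coefficient
   vectors of y^l P(alpha,y) and y^l P_y(alpha,y).  They are all multiples of
   g = gcd(P(alpha,y), P_y(alpha,y)) of degree less than deg P(alpha,y) + d - 1,
   so the rank is at most deg P(alpha,y) + d - 1 - deg g.  Conversely, if a
   polynomial matrix has corank c at alpha, then (x - alpha)^c divides its
   determinant, here the resultant R; so the corank is at most k.  Comparing
   with the size 2d - 1 of the matrix gives deg S = deg P(alpha,y) - deg g >= d - k. *)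

From HB Require Import structures.
From mathcomp Require Import all_boot all_order all_algebra.
From mathcomp Require Import zify.
Set Implicit Arguments.
Unset Strict Implicit.
Unset Printing Implicit Defensive.
Import GRing.Theory.
Local Open Scope ring_scope.

Lemma leq_size_deriv (R : nzRingType) (p : {poly R}) : (size p^`() <= (size p).-1)%N.
Proof.
have [->|p_neq0] := eqVneq p 0; first by rewrite deriv0 size_poly0.
by rewrite -ltnS prednK ?size_poly_gt0 ?lt_size_deriv.
Qed.

Lemma size_deriv_pchar0 (R : idomainType) (p : {poly R}) :
  [pchar R] =i pred0 -> size p^`() = (size p).-1.
Proof.
move=> /pcharf0P charR0; apply/eqP; rewrite eqn_leq leq_size_deriv /=.
have [|lt1p] := leqP (size p) 1; first by case: (size p) => [|[]].
have p1_gt0 : (0 < (size p).-1)%N by rewrite ltn_predRL.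
have : p^`()`_(size p).-2 != 0.
  rewrite coef_deriv prednK // -mulr_natr mulf_eq0 negb_or -lead_coefE.
  by rewrite lead_coef_eq0 -size_poly_eq0 -lt0n (ltnW lt1p) charR0 -lt0n.
by rewrite -(prednK p1_gt0) ltnNge; apply: contra => /(nth_default 0) ->.
Qed.

Lemma mxrank_coef_dvdp_le (L : fieldType) m n (A : 'M[L]_(m, n)) (g : {poly L})
    (p : 'I_m -> {poly L}) (N : nat) :
    (forall i, g %| p i) -> (forall i, size (p i) <= N)%N ->
    (forall i j, A i j = (p i)`_j) ->
  (\rank A <= N - (size g).-1)%N.
Proof.
move=> g_dvd_p size_p A_coef; set K := (N - _)%N.
have size_quo i : (size (p i %/ g)%R <= K)%N.
  have [->|g_neq0] := eqVneq g 0; first by rewrite divp0 size_poly0.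
  by rewrite size_divp //; apply/leq_sub2r/size_p.
suff -> : A = \matrix_(i < m, l < K) (p i %/ g)`_l *m \matrix_(l < K, j < n) ('X^l * g)`_j.
  exact: leq_trans (mxrankM_maxl _ _) (rank_leq_col _).
apply/matrixP => i j; rewrite A_coef mxE -(divpK (g_dvd_p i)).
rewrite -[p i %/ g](take_poly_id (size_quo i)) /take_poly poly_def mulr_suml coef_sum.
by apply: eq_bigr => l _; rewrite !mxE -scalerAl coefZ.
Qed.

Lemma dvdp_det_root_cols (L : fieldType) n r (M : 'M[{poly L}]_n) (a : L) :
    (forall (i j : 'I_n), r <= j -> root (M i j) a)%N ->
  ('X - a%:P) ^+ (n - r) %| \det M.
Proof.
move=> root_M; set q := 'X - a%:P.
pose D := diag_mx (\row_(j < n) if (r <= j)%N then q else 1).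
pose B := \matrix_(i, j) if (r <= j)%N then M i j %/ q else M i j.
have -> : M = B *m D.
  apply/matrixP => i j; rewrite mul_mx_diag !mxE.
  by case: ifP => [le_rj|_]; rewrite ?mulr1 // divpK // dvdp_XsubCl root_M.
have det_D : \det D = q ^+ (n - r).
  rewrite det_diag (eq_bigr (fun j : 'I_n => if (r <= j)%N then q else 1)).
    by rewrite -big_mkcond -(prodr_const_nat r n) big_geq_mkord.
  by move=> j _; rewrite mxE.
by rewrite det_mulmx det_D dvdp_mull.
Qed.

Lemma dvdp_det_XsubC_corank (L : fieldType) n (M : 'M[{poly L}]_n) (a : L) :
  ('X - a%:P) ^+ (n - \rank (map_mx (horner_eval a) M)) %| \det M.
Proof.
set A := map_mx _ M; set r := \rank A; set V := invmx (row_ebase A).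
have V_unit : V \in unitmx by rewrite unitmx_inv row_ebase_unit.
have A_V : A *m V = col_ebase A *m pid_mx r.
  by rewrite -[A in A *m _]mulmx_ebase mulmxK ?row_ebase_unit.
have M_V_at_a : map_mx (horner_eval a) (M *m map_mx polyC V) = A *m V.
  by rewrite map_mxM -map_mx_comp (map_mx_id (fun c => hornerC c a)).
have : ('X - a%:P) ^+ (n - r) %| \det (M *m map_mx polyC V).
  apply: dvdp_det_root_cols => i j le_rj; apply/eqP.
  move/matrixP: M_V_at_a => /(_ i j); rewrite A_V mxE horner_evalE => ->.
  rewrite mxE big1 // => l _; rewrite mxE.
  by case: eqP => [->|]; rewrite ?ltnNge ?le_rj ?andbF ?andFb mulr0.
rewrite det_mulmx det_map_mx mulrC mul_polyC dvdpZr //.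
by rewrite -unitfE -unitmxE.
Qed.

Lemma size_divp_gcdl (F : fieldType) (p q : {poly F}) :
  size (p %/ gcdp p q) = (size p - (size (gcdp p q)).-1)%N.
Proof.
have [/eqP|] := eqVneq (gcdp p q) 0; last exact: size_divp.
by rewrite gcdp_eq0 => /andP[/eqP -> _]; rewrite div0p size_poly0.
Qed.

Section SylvesterRank.

Variables (R : nzRingType) (L : fieldType) (f : {rmorphism R -> L}) (p q : {poly R}).
Local Notation pf := (map_poly f p).
Local Notation qf := (map_poly f q).

Lemma mxrank_map_Sylvester_mx :
  (\rank (map_mx f (Sylvester_mx p q))
     <= maxn (size pf + (size q).-2) (size qf + (size p).-2) - (size (gcdp pf qf)).-1)%N.
Proof.
pose row (i : 'I_((size q).-1 + (size p).-1)) :=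
  match split i with inl l => pf * 'X^l | inr l => qf * 'X^l end.
apply: (mxrank_coef_dvdp_le (p := row)).
- by move=> i; rewrite /row; case: split => l; apply: dvdp_mulr;
    [exact: dvdp_gcdl | exact: dvdp_gcdr].
- move=> i; rewrite /row; case: split => l; apply: leq_trans (size_polyMleq _ _) _;
    rewrite size_polyXn addnS /=;
    [apply: leq_trans (leq_maxl _ _) | apply: leq_trans (leq_maxr _ _)];
    by rewrite leq_add2l -ltnS (leq_trans (ltn_ord l) (leqSpred _)).
- move=> i j; rewrite mxE Sylvester_mxE /row; case: split => l;
    by rewrite coefMXn coef_map rmorphMn; case: leqP; rewrite ?mulr1n ?mulr0n.
Qed.

End SylvesterRank.

Theorem lemma13 (C : fieldType) (L : closedFieldType)
    (iota : {rmorphism C -> L})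
    (charC0 : [pchar C] =i pred0)
    (P : {poly {poly C}}) (d : nat) (hdeg : size P = d.+1)
    (alpha : L) (k : nat) (hk : (0 < k)%N)
    (hdiv : ('X - alpha%:P) ^+ k %| map_poly iota (resultant P P^`()))
    (hndiv : ~~ (('X - alpha%:P) ^+ k.+1 %| map_poly iota (resultant P P^`()))) :
  let Pa := evalx iota alpha P in
  let S := Pa %/ gcdp Pa Pa^`() in
  (d - k <= (size S).-1)%N.
Proof.
cbv zeta; set Pa := evalx iota alpha P.
pose phi : {rmorphism {poly C} -> L} := horner_eval alpha \o map_poly iota.
have size_P' : size P^`() = d.
  by rewrite size_deriv_pchar0 ?hdeg // => c; rewrite pchar_poly charC0.
have corank :
    ((size P^`()).-1 + (size P).-1 - \rank (map_mx phi (Sylvester_mx P P^`())) <= k)%N.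
  rewrite leqNgt; apply: contra hndiv => lt_k; apply: dvdp_trans (dvdp_exp2l _ lt_k) _.
  rewrite /resultant -det_map_mx.
  have := dvdp_det_XsubC_corank (map_mx (map_poly iota) (Sylvester_mx P P^`())) alpha.
  by rewrite -map_mx_comp.
have rank_le := mxrank_map_Sylvester_mx phi P P^`().
rewrite -deriv_map (_ : map_poly phi P = Pa) // in rank_le.
move: (\rank _ : nat) rank_le corank => r.
rewrite size_P' hdeg size_divp_gcdl; have := leq_size_deriv Pa.
by move: (size Pa) (size Pa^`()) (size (gcdp Pa Pa^`())) => *; lia.
Qed.
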